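(* Let $d\ge2$, $R=\mathbb{Z}[1/p: p\text{ prime},\,2\le p\le d]$, $S=R[s_1,\dots,s_{d-1}]$ graded by total degree, let \[f_{\mathbf{s}}(x)=\tfrac1dx^d-\tfrac1{d-1}(s_1+\cdots+s_{d-1})x^{d-1}+\cdots+(-1)^{d-1}s_1\cdots s_{d-1}x\in S[x]\] (the polynomial with $f_{\mathbf{s}}(0)=0$ and $f_{\mathbf{s}}'(x)=\prod_i(x-s_i)$), and let $F_i=f_{\mathbf{s}}(s_i)\in S$ for $1\le i\le d-1$. Then there exist an integer $D\ge1$ and elements $A_{ij}\in S$, each homogeneous of degree $D-d$, such that for every $i$, \[s_i^D=\sum_{j=1}^{d-1}A_{ij}F_j.\] *)

From HB Require Import structures.
From mathcomp Require Import all_boot all_order all_algebra.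
Set Implicit Arguments. Unset Strict Implicit. Unset Printing Implicit Defensive.
Import Order.TTheory GRing.Theory Num.Theory.
Local Open Scope ring_scope.

(* Polynomial ring rat[s_0, ..., s_(n-1)] as iterated univariate polynomials:
   mpoly 0 = rat, mpoly n.+1 = (mpoly n)[s_n]. *)
Fixpoint mpoly (n : nat) : comNzRingType :=
  match n with
  | 0 => rat
  | n'.+1 => {poly (mpoly n')}
  end.

(* the variable s_i (0 <= i < n) in mpoly n *)
Fixpoint mvar (n i : nat) : mpoly n :=
  match n return mpoly n with
  | 0 => 0
  | n'.+1 => if i == n' then ('X : {poly (mpoly n')}) else (mvar n' i)%:P
  end.

Fixpoint mcst (n : nat) (q : rat) : mpoly n :=
  match n return mpoly n with
  | 0 => q
  | n'.+1 => (mcst n' q)%:P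
  end.

(* R_d = Z[1/p : p prime, p <= d] as a subset of rat *)
Definition inRd (d : nat) (q : rat) : bool :=
  all (fun p => (p <= d)%N) (primes `|denq q|%N).

(* all coefficients lie in R_d, i.e. the polynomial lies in S = R_d[s] *)
Fixpoint inS (d : nat) (n : nat) : mpoly n -> bool :=
  match n return mpoly n -> bool with
  | 0 => fun q => inRd d q
  | n'.+1 => fun p => all (@inS d n') (polyseq (p : {poly (mpoly n')}))
  end.

(* homogeneous of total degree e (e : int; the zero polynomial is homogeneous
   of every degree, a nonzero one of negative degree never is) *)
Fixpoint homog (n : nat) : int -> mpoly n -> bool :=
  match n return int -> mpoly n -> bool with
  | 0 => fun e c => (c == 0) || (e == 0)
  | n'.+1 => fun e p =>
      all (fun k : nat => @homog n' (e - k%:Z) ((p : {poly (mpoly n')})`_k))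
          (iota 0 (size (p : {poly (mpoly n')})))
  end.

Definition fder (d : nat) : {poly (mpoly d.-1)} :=
  \prod_(i < d.-1) ('X - (mvar d.-1 i)%:P).

Definition fs (d : nat) : {poly (mpoly d.-1)} :=
  \sum_(k < size (fder d))
     ((fder d)`_k * mcst d.-1 (k.+1%:R)^-1)%:P * 'X^(k.+1).

Definition Fi (d : nat) (i : nat) : mpoly d.-1 := (fs d).[mvar d.-1 i].

From HB Require Import structures.
From mathcomp Require Import all_boot all_order all_algebra.
From mathcomp Require Import boolp classical_sets.
From mathcomp Require Import ring zify.
Set Implicit Arguments. Unset Strict Implicit. Unset Printing Implicit Defensive.
Import Order.TTheory GRing.Theory Num.Theory.
Local Open Scope ring_scope.

(* Over a field in which 1, ..., n are invertible, let f(0) = 0 and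
   f' = prod_j (x - u_j) with n factors. If every critical point u_j is a root
   of f, then all u_j are 0: a root of f' of multiplicity m is a root of f of
   multiplicity m + 1, so deg f >= n + #{distinct u_j}; hence there is a single
   critical point u, f = c (x - u)^(n+1), and f(0) = 0 forces u = 0.
   Applied in the fraction fields of the quotients of S by prime ideals, this
   puts every s_i in each prime ideal containing F_1, ..., F_(d-1); a prime
   ideal maximal among those avoiding the powers of s_i (Zorn) then shows that
   some power of s_i lies in the ideal generated by the F_j. As the F_j are
   homogeneous of degree d, keeping the homogeneous parts of degree D - d of the
   coefficients gives the homogeneous A_ij for a common exponent D. *)

Section FieldRoots.
Variable K : fieldType.
Implicit Types (f : {poly K}) (s : seq K) (t : K).

Lemma dvdp_XsubC_expS_deriv f t n :
  (forall k, (0 < k <= n)%N -> k%:R != 0 :> K) -> f.[t] = 0 ->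
  forall m, (m <= n)%N -> ('X - t%:P) ^+ m %| f^`() -> ('X - t%:P) ^+ m.+1 %| f.
Proof.
move=> charK ft; elim=> [|m IHm] le_mn dvd_f'.
  by rewrite expr1 dvdp_XsubCl /root ft.
have /dvdpP[g fE] := IHm (ltnW le_mn) (dvdp_trans (dvdp_exp2l _ (leqnSn m)) dvd_f').
have Xt_neq0 : 'X - t%:P != 0 by rewrite polyXsubC_eq0.
move: dvd_f'; rewrite fE derivM deriv_exp derivXsubC mul1r /= dvdp_addr; last first.
  by rewrite dvdp_mull.
rewrite mulrnAr -scaler_nat dvdpZr ?charK ?ltnS //= exprS dvdp_mul2r ?expf_neq0 //.
by rewrite -exprS (exprS _ m.+1) dvdp_mul2r ?expf_neq0.
Qed.

Lemma dvdp_XsubC_count_prod s t :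
  ('X - t%:P) ^+ count_mem t s %| \prod_(u <- s) ('X - u%:P).
Proof.
rewrite (bigID (pred1 t)) /= dvdp_mulr //.
rewrite (eq_bigr (fun _ => 'X - t%:P)); last by move=> u /eqP ->.
by rewrite big_const_seq -Monoid.iteropE.
Qed.

Lemma prod_XsubC_undup_count s :
  \prod_(t <- undup s) ('X - t%:P) ^+ count_mem t s = \prod_(u <- s) ('X - u%:P).
Proof.
rewrite -[RHS]big_undup_iterop_count; apply: eq_bigr => t _.
by rewrite Monoid.iteropE -(Monoid.iteropE (@GRing.mul _)).
Qed.

Section CriticalRoots.
Variables (s : seq K) (f : {poly K}).
Hypothesis charK : forall k, (0 < k <= size s)%N -> k%:R != 0 :> K.
Hypothesis f'E : f^`() = \prod_(u <- s) ('X - u%:P).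
Hypothesis f_root : forall u, u \in s -> f.[u] = 0.

Let mult t := count_mem t s.

Lemma dvdp_prod_XsubC_multiplicity :
  \prod_(t <- undup s) ('X - t%:P) ^+ (mult t).+1 %| f.
Proof.
have dvd_f t : t \in s -> ('X - t%:P) ^+ (mult t).+1 %| f.
  move=> ts; apply: (dvdp_XsubC_expS_deriv charK (f_root ts) (count_size _ _)).
  by rewrite f'E dvdp_XsubC_count_prod.
have : {subset undup s <= s} by move=> x; rewrite mem_undup.
elim: (undup s) (undup_uniq s) => [|t U IHU] /=; first by rewrite big_nil dvd1p.
case/andP=> tU uU sub; rewrite big_cons Gauss_dvdp.
  by rewrite dvd_f ?sub ?mem_head //= IHU // => x xU; rewrite sub // inE xU orbT.
apply: coprimep_expl; rewrite coprimep_sym coprimep_XsubC /root horner_prod.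
rewrite prodf_seq_neq0; apply/allP=> x xU /=; rewrite horner_exp hornerXsubC.
by rewrite expf_neq0 // subr_eq0; apply: contraNneq tU => ->.
Qed.

Lemma prod_XsubC_multiplicityE :
  \prod_(t <- undup s) ('X - t%:P) ^+ (mult t).+1 =
  \prod_(u <- s) ('X - u%:P) * \prod_(t <- undup s) ('X - t%:P).
Proof.
by rewrite -prod_XsubC_undup_count -big_split; apply: eq_bigr => t _; rewrite exprSr.
Qed.

Lemma critical_poly_neq0 : f != 0.
Proof.
have : \prod_(u <- s) ('X - u%:P) != 0 by rewrite monic_neq0 ?monic_prod_XsubC.
by apply: contraNneq => f0; rewrite -f'E f0 deriv0.
Qed.

Hypothesis size_f : (size f <= (size s).+2)%N.

Lemma size_undup_critical : (size (undup s) <= 1)%N.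
Proof.
have := dvdp_leq critical_poly_neq0 dvdp_prod_XsubC_multiplicity.
rewrite prod_XsubC_multiplicityE size_mul ?monic_neq0 ?monic_prod_XsubC //.
by rewrite !size_prod_XsubC /= => /leq_trans/(_ size_f); lia.
Qed.

Hypothesis f0 : f.[0] = 0.

Lemma critical_root_eq0 u : u \in s -> u = 0.
Proof.
move=> us; have ut : undup s = [:: u].
  move: size_undup_critical (us); rewrite -mem_undup.
  by case: (undup s) => [|t [|]] //; rewrite inE => _ /eqP ->.
have mult_u : mult u = size s.
  rewrite -count_predT; apply: eq_in_count => x.
  by rewrite -mem_undup ut inE => /eqP ->; rewrite /= eqxx.
have := dvdp_prod_XsubC_multiplicity; rewrite ut big_seq1 mult_u => /dvdpP[g fE].
have size_g : (size g <= 1)%N.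
  have g_neq0 : g != 0.
    by apply: contraNneq critical_poly_neq0 => g0; rewrite fE g0 mul0r.
  move: size_f; rewrite fE size_mul ?expf_neq0 ?polyXsubC_eq0 // size_exp_XsubC.
  by move: (size g) (size s); lia.
move: f0; rewrite fE hornerM horner_exp hornerXsubC (size1_polyC size_g) hornerC.
move/eqP; rewrite mulf_eq0 expf_eq0 sub0r oppr_eq0 => /orP[g0|/andP[_ /eqP //]].
by case/eqP: critical_poly_neq0; rewrite fE (size1_polyC size_g) (eqP g0) mul0r.
Qed.

End CriticalRoots.
End FieldRoots.

Section PrimeAvoidingPowers.
Local Open Scope classical_set_scope.
Variable Q : comNzRingType.
Implicit Types (I J : set Q) (a x y : Q).

Definition ideal_set J :=
  [/\ J 0, forall x y, J x -> J y -> J (x + y) & forall c x, J x -> J (c * x)].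

Definition prime_set J :=
  [/\ ideal_set J, ~ J 1 & forall x y, J (x * y) -> J x \/ J y].

Definition avoids_powers a J := forall N, ~ J (a ^+ N).

Definition in_ideal n (G : 'I_n -> Q) x := exists A : 'I_n -> Q, x = \sum_j A j * G j.

Lemma ideal_set_in_ideal n (G : 'I_n -> Q) : ideal_set (in_ideal G).
Proof.
split.
- by exists (fun _ => 0); rewrite big1 // => j _; rewrite mul0r.
- move=> x y [A ->] [B ->]; exists (fun j => A j + B j).
  by rewrite -big_split; apply: eq_bigr => j _; rewrite mulrDl.
- move=> c x [A ->]; exists (fun j => c * A j).
  by rewrite mulr_sumr; apply: eq_bigr => j _; rewrite mulrA.
Qed.

Lemma in_ideal_gen n (G : 'I_n -> Q) j : in_ideal G (G j).
Proof.
exists (fun k => (k == j)%:R); rewrite (bigD1 j) //= eqxx mul1r big1 ?addr0 //.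
by move=> k /negPf ->; rewrite mul0r.
Qed.

Definition ideal_adjoin J x : set Q := [set w | exists j b, J j /\ w = j + b * x].

Section Adjoin.
Variable J : set Q.
Hypothesis idJ : ideal_set J.

Lemma ideal_set_adjoin x : ideal_set (ideal_adjoin J x).
Proof.
case: idJ => J0 JD JM; split.
- by exists 0, 0; rewrite mul0r addr0.
- move=> _ _ [j1 [b1 [J1 ->]]] [j2 [b2 [J2 ->]]]; exists (j1 + j2), (b1 + b2).
  by split; [exact: JD | rewrite mulrDl addrACA].
- move=> c _ [j [b [Jj ->]]]; exists (c * j), (c * b).
  by split; [exact: JM | rewrite mulrDr mulrA].
Qed.

Lemma sub_ideal_adjoin x : J `<=` ideal_adjoin J x.
Proof. by move=> w Jw; exists w, 0; rewrite mul0r addr0. Qed.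

Lemma ideal_adjoin_elt x : ideal_adjoin J x x.
Proof. by case: idJ => J0 _ _; exists 0, 1; rewrite add0r mul1r. Qed.

Lemma ideal_adjoinM x y u v :
  J (x * y) -> ideal_adjoin J x u -> ideal_adjoin J y v -> J (u * v).
Proof.
case: idJ => _ JD JM Jxy [j1 [b1 [J1 ->]]] [j2 [b2 [J2 ->]]].
rewrite mulrDl !mulrDr; apply: (JD); apply: (JD).
- by rewrite mulrC; apply: JM.
- by rewrite mulrC; apply: JM.
- exact: JM.
- by rewrite mulrACA; apply: JM.
Qed.

End Adjoin.

Lemma maximal_avoiding_prime a J :
  ideal_set J -> avoids_powers a J ->
  (forall J', ideal_set J' -> avoids_powers a J' -> J `<=` J' -> J' = J) ->
  prime_set J.
Proof.
move=> idJ avJ maxJ; split=> // [J1|x y Jxy]; first by apply: (avJ 0%N); rewrite expr0.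
have meets z : ~ J z -> exists N, ideal_adjoin J z (a ^+ N).
  move=> nJz; apply: contrapT => /forallNP avz; apply: nJz.
  rewrite -(maxJ _ (ideal_set_adjoin idJ z) avz (sub_ideal_adjoin z)).
  exact: ideal_adjoin_elt.
have [Jx|/meets[N JxN]] := pselect (J x); [by left | right].
apply: contrapT => /meets[M JyM]; apply: (avJ (N + M)%N).
by rewrite exprD; exact: ideal_adjoinM Jxy JxN JyM.
Qed.

Lemma ideal_set_chain_union (C : set (set Q)) :
  C !=set0 -> C `<=` ideal_set -> total_on C subset ->
  ideal_set (\bigcup_(J in C) J).
Proof.
move=> [J0 CJ0] idC totC; split.
- by exists J0 => //; case: (idC _ CJ0).
- move=> x y [J1 CJ1 J1x] [J2 CJ2 J2y].
  have [J12|J21] := totC _ _ CJ1 CJ2.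
    by exists J2 => //; case: (idC _ CJ2) => _ JD _; apply: JD => //; apply: J12.
  by exists J1 => //; case: (idC _ CJ1) => _ JD _; apply: JD => //; apply: J21.
- by move=> c x [J CJ Jx]; exists J => //; case: (idC _ CJ) => _ _; apply.
Qed.

Definition avoiding_ideal a I J := [/\ ideal_set J, I `<=` J & avoids_powers a J].

Lemma avoiding_ideal_chain_union a I (C : set (set Q)) :
  C !=set0 -> C `<=` avoiding_ideal a I -> total_on C subset ->
  avoiding_ideal a I (\bigcup_(J in C) J).
Proof.
move=> [J0 CJ0] avC totC; split.
- by apply: ideal_set_chain_union => //; [exists J0 | move=> J /avC[]].
- by move=> x Ix; exists J0 => //; case: (avC _ CJ0) => _ IJ0 _; exact: IJ0.
- by move=> N [J /avC[_ _ avJ] JaN]; exact: avJ JaN.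
Qed.

Lemma exists_prime_avoiding_powers a I :
  ideal_set I -> avoids_powers a I ->
  exists J, [/\ prime_set J, I `<=` J & avoids_powers a J].
Proof.
move=> idI avI.
pose T := {J : set Q | avoiding_ideal a I J}.
pose R (s t : T) := `[< sval s `<=` sval t >].
have [| | | |[J [idJ IJ avJ]] maxJ] := @Zorn T R.
- by move=> s; exact/asboolP.
- by move=> r s t /asboolP rs /asboolP st; apply/asboolP; exact: subset_trans st.
- by move=> [J PJ] [J' PJ'] /asboolP JJ' /asboolP J'J; exact/eq_exist/seteqP.
- move=> C totC; have [[s0 Cs0]|C0] := pselect (C !=set0); last first.
    exists (exist _ I (And3 idI (@subset_refl _ I) avI)) => s Cs.
    by case: C0; exists s.
  have avU : avoiding_ideal a I (\bigcup_(J in sval @` C) J).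
    apply: avoiding_ideal_chain_union; first by exists (sval s0), s0.
      by move=> _ [s _ <-]; exact: svalP.
    move=> _ _ [s Cs <-] [t Ct <-].
    by have [/asboolP|/asboolP] := totC _ _ Cs Ct; [left|right].
  exists (exist _ _ avU) => s Cs; apply/asboolP => x sx.
  by exists (sval s) => //; exists s.
exists J; split=> //; apply: maximal_avoiding_prime => // J' idJ' avJ' JJ'.
have IJ' : I `<=` J' by apply: subset_trans JJ'.
have /maxJ/(congr1 sval) // :
  R (exist _ J (And3 idJ IJ avJ)) (exist _ J' (And3 idJ' IJ' avJ')).
exact/asboolP.
Qed.

End PrimeAvoidingPowers.

Section ResidueField.
Variables (Q : comNzRingType) (J : set Q).
Hypothesis primeJ : prime_set J.

Definition prime_mem : {pred Q} := fun x => `[< J x >].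

Lemma prime_mem_idealr : idealr_closed prime_mem.
Proof.
case: primeJ => -[J0 JD JM] J1 _; split; first exact/asboolP.
  by apply/negP => /asboolP.
by move=> a u v /asboolP Ju /asboolP Jv; apply/asboolP/JD => //; apply: JM.
Qed.

HB.instance Definition _ := isIdealr.Build Q prime_mem prime_mem_idealr.

Lemma prime_mem_prime : prime_idealr_closed prime_mem.
Proof.
case: primeJ => _ _ Jprime u v /asboolP /Jprime[] ?; apply/orP; [left|right].
  exact/asboolP.
exact/asboolP.
Qed.

HB.instance Definition _ := isPrimeIdealrClosed.Build Q prime_mem prime_mem_prime.

Definition prime_idealr_of : prime_idealr Q := PrimeIdealr.clone Q prime_mem _.
Definition residue_domain := {ideal_quot prime_idealr_of}.
HB.instance Definition _ := GRing.ComNzRing.on residue_domain.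

(* The quotient only comes with a ring structure; its inverse is chosen
   classically. *)
Definition residue_unit : {pred residue_domain} :=
  fun x => `[< exists y, y * x = 1 >].

Definition residue_inv (x : residue_domain) : residue_domain :=
  match pselect (exists y, y * x = 1) with
  | left ex_y => projT1 (cid ex_y)
  | right _ => x
  end.

Lemma residue_mulVr : {in residue_unit, left_inverse 1 residue_inv *%R}.
Proof.
move=> x /asboolP ex_y; rewrite /residue_inv; case: pselect => // {}ex_y.
by case: (cid ex_y).
Qed.

Lemma residue_unitPl (x y : residue_domain) : y * x = 1 -> residue_unit x.
Proof. by move=> yx; apply/asboolP; exists y. Qed.

Lemma residue_inv_out : {in [predC residue_unit], residue_inv =1 id}.
Proof.
by move=> x /[!inE] /asboolPn nex; rewrite /residue_inv; case: pselect.
Qed.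

HB.instance Definition _ := GRing.ComNzRing_hasMulInverse.Build residue_domain
  residue_mulVr residue_unitPl residue_inv_out.

Lemma residue_integral : GRing.integral_domain_axiom residue_domain.
Proof. by move=> x y; apply: Quotient.rquot_IdomainAxiom. Qed.

HB.instance Definition _ :=
  GRing.ComUnitRing_isIntegral.Build residue_domain residue_integral.

Definition residue_field := {fraction residue_domain}.

Definition residue_proj (x : Q) : residue_domain :=
  (\pi_({ideal_quot prime_idealr_of}) x)%qT.

Definition to_residue (x : Q) : residue_field := tofrac (residue_proj x).

Lemma to_residue_zmod : zmod_morphism to_residue.
Proof. by move=> x y; rewrite /to_residue /residue_proj !rmorphB. Qed.

Lemma to_residue_monoid : monoid_morphism to_residue.
Proof.
by split=> [|x y]; rewrite /to_residue /residue_proj ?rmorph1 // !rmorphM.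
Qed.

HB.instance Definition _ :=
  GRing.isZmodMorphism.Build Q residue_field to_residue to_residue_zmod.
HB.instance Definition _ :=
  GRing.isMonoidMorphism.Build Q residue_field to_residue to_residue_monoid.

Lemma to_residue_eq0 x : (to_residue x == 0) = `[< J x >].
Proof.
rewrite /to_residue tofrac_eq0 /residue_proj.
rewrite -(rmorph0 (\pi_({ideal_quot prime_idealr_of}))%qT).
by rewrite -Quotient.idealrBE subr0.
Qed.

End ResidueField.

Lemma prime_set_kernel (Q : comNzRingType) (J : set Q) : prime_set J ->
  exists (K : fieldType) (phi : {rmorphism Q -> K}), forall x, phi x = 0 <-> J x.
Proof.
move=> primeJ; exists (residue_field primeJ), (to_residue primeJ) => x.
by rewrite (rwP eqP) to_residue_eq0; split=> /asboolP.
Qed.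

Theorem critical_point_pow_in_ideal (Q : comNzRingType) n (s : 'I_n -> Q)
    (f : {poly Q}) :
  (forall k, (0 < k <= n)%N -> exists y : Q, y * k%:R = 1) ->
  f^`() = \prod_(j < n) ('X - (s j)%:P) -> f.[0] = 0 -> (size f <= n.+2)%N ->
  forall i, exists N, in_ideal (fun j => f.[s j]) (s i ^+ N).
Proof.
move=> inv_k f'E f0 size_f i; apply: contrapT => /forallNP avoid.
have [J [primeJ IJ avJ]] := exists_prime_avoiding_powers (ideal_set_in_ideal _) avoid.
have [K [phi ker_phi]] := prime_set_kernel primeJ.
pose sK := [seq phi (s j) | j <- enum 'I_n].
have size_sK : size sK = n by rewrite size_map size_enum_ord.
apply: (avJ 1%N); rewrite expr1; apply/ker_phi.
apply: (@critical_root_eq0 _ sK (map_poly phi f)).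
- move=> k; rewrite size_sK => /inv_k[y yk]; apply/negP => /eqP k0.
  by move: (oner_neq0 K); rewrite -(rmorph1 phi) -yk rmorphM rmorph_nat k0 mulr0 eqxx.
- rewrite deriv_map f'E rmorph_prod big_map big_enum /=.
  by apply: eq_bigr => j _; rewrite map_polyXsubC.
- by move=> _ /mapP[j _ ->]; rewrite horner_map; apply/ker_phi/IJ/in_ideal_gen.
- by rewrite size_sK (leq_trans (size_poly _ _)).
- by rewrite -(rmorph0 phi) horner_map f0.
- by apply: map_f; rewrite mem_enum.
Qed.

Section CoefficientRing.
Variable d : nat.

Lemma inRdP q :
  reflect (forall p, prime p -> (p %| `|denq q|)%N -> (p <= d)%N) (inRd d q).
Proof.
apply: (iffP allP) => [dq p pp pq|dq p].
  by apply: dq; rewrite mem_primes pp pq absz_gt0 denq_neq0.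
by rewrite mem_primes => /and3P[pp _ pq]; apply: dq.
Qed.

Lemma inRd_frac (m n : int) : n != 0 ->
  (forall p, prime p -> (p %| `|n|)%N -> (p <= d)%N) -> inRd d (m%:~R / n%:~R).
Proof.
move=> n0 dn; apply/inRdP => p pp pq; apply: dn => //.
apply: dvdn_trans pq _; rewrite -(fracqE (m, n)) den_fracq /= n0 /=.
exact/dvdn_div/dvdn_gcdr.
Qed.

Lemma inRd_denM a b :
  inRd d a -> inRd d b -> forall p, prime p ->
  (p %| `|(denq a * denq b)%R|)%N -> (p <= d)%N.
Proof.
move=> /inRdP da /inRdP db p pp; rewrite abszM Euclid_dvdM // => /orP[].
  exact: da.
exact: db.
Qed.

Lemma inRdM a b : inRd d a -> inRd d b -> inRd d (a * b).
Proof.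
move=> da db; rewrite -[a]divq_num_den -[b]divq_num_den mulf_div -!rmorphM.
by apply: inRd_frac (inRd_denM da db); rewrite mulf_neq0 ?denq_neq0.
Qed.

Lemma inRdD a b : inRd d a -> inRd d b -> inRd d (a + b).
Proof.
move=> da db; rewrite -[a]divq_num_den -[b]divq_num_den.
rewrite addf_div ?intr_eq0 ?denq_neq0 // -!rmorphM -rmorphD.
by apply: inRd_frac (inRd_denM da db); rewrite mulf_neq0 ?denq_neq0.
Qed.

Lemma inRdN a : inRd d a -> inRd d (- a).
Proof. by rewrite /inRd denqN. Qed.

Lemma inRd_int (n : int) : inRd d n%:~R.
Proof. by rewrite /inRd denq_int. Qed.

Lemma inRdV_nat k : (0 < k <= d)%N -> inRd d k%:R^-1.
Proof.
case/andP=> k0 kd; apply/inRdP => p pp.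
rewrite -[k%:R]/((k%:Z)%:~R) denqVz ?intr_eq0 ?lt0n_neq0 //= => pk.
exact: leq_trans (dvdn_leq k0 pk) kd.
Qed.

End CoefficientRing.

Lemma mcst1 n : mcst n 1 = 1.
Proof. by elim: n => [|n IHn] //=; rewrite IHn. Qed.

Lemma mcstM n a b : mcst n (a * b) = mcst n a * mcst n b.
Proof. by elim: n => [|n IHn] //=; rewrite IHn polyCM. Qed.

Lemma mcst_nat n k : mcst n k%:R = k%:R.
Proof. by elim: n => [|n IHn] //=; rewrite IHn polyC_natr. Qed.

Section InS.
Variable d : nat.

Lemma inS0 n : @inS d n 0.
Proof. by case: n => [|n] /=; [exact: (inRd_int d 0) | rewrite polyseq0]. Qed.

Lemma inSP n (p : mpoly n.+1) : reflect (forall k, inS d p`_k) (@inS d n.+1 p).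
Proof.
apply: (iffP allP) => [Sp k|Sp x /(nth_index 0) <-]; last exact: Sp.
by have [/(mem_nth 0)/Sp //|le_p_k] := ltnP k (size p); rewrite nth_default ?inS0.
Qed.

Lemma inSD n (x y : mpoly n) : inS d x -> inS d y -> inS d (x + y).
Proof.
elim: n x y => [|n IHn] x y; first exact: inRdD.
by move=> /inSP Sx /inSP Sy; apply/inSP => k; rewrite coefD IHn.
Qed.

Lemma inSN n (x : mpoly n) : inS d x -> inS d (- x).
Proof.
elim: n x => [|n IHn] x; first exact: inRdN.
by move=> /inSP Sx; apply/inSP => k; rewrite coefN IHn.
Qed.

Lemma inS_sum n I (r : seq I) (P : pred I) (F : I -> mpoly n) :
  (forall i, P i -> inS d (F i)) -> inS d (\sum_(i <- r | P i) F i).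
Proof. by move=> SF; elim/big_ind: _ => //; [exact: inS0 | exact: inSD]. Qed.

Lemma inSM n (x y : mpoly n) : inS d x -> inS d y -> inS d (x * y).
Proof.
elim: n x y => [|n IHn] x y; first exact: inRdM.
move=> /inSP Sx /inSP Sy; apply/inSP => k; rewrite coefM.
by apply: inS_sum => i _; apply: IHn.
Qed.

Lemma inS_mcst n q : inRd d q -> inS d (mcst n q).
Proof.
elim: n => [|n IHn] //= dq; apply/inSP => k.
by rewrite coefC; case: eqP => _; [exact: IHn | exact: inS0].
Qed.

Lemma inS1 n : @inS d n 1.
Proof. by rewrite -mcst1; apply/inS_mcst/(inRd_int d 1). Qed.

Lemma inS_prod n I (r : seq I) (P : pred I) (F : I -> mpoly n) :
  (forall i, P i -> inS d (F i)) -> inS d (\prod_(i <- r | P i) F i).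
Proof. by move=> SF; elim/big_ind: _ => //; [exact: inS1 | exact: inSM]. Qed.

Lemma inSX n (x : mpoly n) k : inS d x -> inS d (x ^+ k).
Proof. by move=> Sx; elim: k => [|k IHk]; rewrite ?expr0 ?inS1 // exprS inSM. Qed.

Lemma inSC n (c : mpoly n) : inS d c -> @inS d n.+1 c%:P.
Proof. by move=> Sc; apply/inSP => k; rewrite coefC; case: eqP; rewrite ?inS0. Qed.

Lemma inS_polyX n : @inS d n.+1 'X.
Proof. by apply/inSP => k; rewrite coefX; case: eqP; rewrite ?inS0 ?inS1. Qed.

Lemma inS_mvar n i : inS d (mvar n i).
Proof.
elim: n => [|n IHn] /=; first exact: (inRd_int d 0).
by case: eqP => _; [exact: inS_polyX | exact: inSC].
Qed.

End InS.

Lemma homog0 n e : @homog n e 0.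
Proof. by case: n => [|n] /=; rewrite ?size_poly0. Qed.

Lemma homogP n e (p : mpoly n.+1) :
  reflect (forall k : nat, homog (e - k%:Z) p`_k) (@homog n.+1 e p).
Proof.
apply: (iffP allP) => [hp k|hp k _]; last exact: hp.
have [lt_k_p|le_p_k] := ltnP k (size p); first by apply: hp; rewrite mem_iota.
by rewrite nth_default ?homog0.
Qed.

Lemma homogD n e (x y : mpoly n) : homog e x -> homog e y -> homog e (x + y).
Proof.
elim: n e x y => [|n IHn] e x y /=.
  case/orP=> [/eqP->|e0]; case/orP=> [/eqP->|e0'];
    by rewrite ?addr0 ?add0r ?eqxx ?e0 ?e0' ?orbT.
by move=> /homogP hx /homogP hy; apply/homogP => k; rewrite coefD IHn.
Qed.

Lemma homogN n e (x : mpoly n) : homog e x -> homog e (- x).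
Proof.
elim: n e x => [|n IHn] e x /=.
  by case/orP=> [/eqP->|e0]; rewrite ?oppr0 ?eqxx ?e0 ?orbT.
by move=> /homogP hx; apply/homogP => k; rewrite coefN IHn.
Qed.

Lemma homog_sum n e I (r : seq I) (P : pred I) (F : I -> mpoly n) :
  (forall i, P i -> homog e (F i)) -> homog e (\sum_(i <- r | P i) F i).
Proof. by move=> hF; elim/big_ind: _ => //; [exact: homog0 | exact: homogD]. Qed.

Lemma homogM n a b (x y : mpoly n) :
  homog a x -> homog b y -> homog (a + b) (x * y).
Proof.
elim: n a b x y => [|n IHn] a b x y /=.
  case/orP=> [/eqP->|/eqP->]; first by rewrite mul0r eqxx.
  by case/orP=> [/eqP->|/eqP->]; rewrite ?mulr0 ?eqxx ?orbT.
move=> /homogP hx /homogP hy; apply/homogP => k; rewrite coefM.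
apply: homog_sum => i _.
have -> : a + b - k%:Z = (a - i%:Z) + (b - (k - i)%N%:Z).
  by rewrite -subzn -1?ltnS //; ring.
exact: IHn.
Qed.

Lemma homog_mcst n q : homog 0 (mcst n q).
Proof.
elim: n => [|n IHn] /=; first by rewrite eqxx orbT.
by apply/homogP => k; rewrite coefC; case: eqP => [->|_]; rewrite ?subr0 ?homog0.
Qed.

Lemma homog_mvar n i : homog 1 (mvar n i).
Proof.
elim: n => [|n IHn] //=; case: eqP => _; apply/homogP => k.
  rewrite coefX; case: eqP => [->|_]; last exact: homog0.
  by rewrite subrr -(mcst1 n) homog_mcst.
by rewrite coefC; case: eqP => [->|_]; rewrite ?subr0 ?homog0.
Qed.

Lemma homogX n k (x : mpoly n) : homog 1 x -> homog k%:Z (x ^+ k).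
Proof.
move=> hx; elim: k => [|k IHk]; first by rewrite expr0 -(mcst1 n) homog_mcst.
by rewrite exprS -addn1 PoszD addrC; apply: homogM.
Qed.

Fixpoint hpart (n : nat) : int -> mpoly n -> mpoly n :=
  match n return int -> mpoly n -> mpoly n with
  | 0 => fun e c => if e == 0 then c else 0
  | n'.+1 => fun e (p : mpoly n'.+1) =>
      \poly_(k < size (p : {poly mpoly n'})) hpart (e - k%:Z) (p : {poly mpoly n'})`_k
  end.
Arguments hpart : clear implicits.

Lemma hpart0 n e : hpart n e 0 = 0.
Proof.
case: n => [|n] /=; first by case: ifP.
by apply/polyP => k; rewrite coef_poly size_poly0 coef0.
Qed.

Lemma coef_hpart n e (p : mpoly n.+1) k : (hpart n.+1 e p)`_k = hpart n (e - k%:Z) p`_k.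
Proof.
by rewrite /= coef_poly; case: ltnP => // le_p_k; rewrite nth_default ?hpart0.
Qed.

Lemma hpartD n e (x y : mpoly n) : hpart n e (x + y) = hpart n e x + hpart n e y.
Proof.
elim: n e x y => [|n IHn] e x y; first by rewrite /=; case: ifP; rewrite ?addr0.
by apply/polyP => k; rewrite coefD !coef_hpart coefD IHn.
Qed.

Lemma hpart_sum n e I (r : seq I) (P : pred I) (F : I -> mpoly n) :
  hpart n e (\sum_(i <- r | P i) F i) = \sum_(i <- r | P i) hpart n e (F i).
Proof. by elim/big_rec2: _ => [|i y1 y2 _ <-]; rewrite ?hpart0 ?hpartD. Qed.

Lemma homog_hpart n e (x : mpoly n) : homog e (hpart n e x).
Proof.
elim: n e x => [|n IHn] e x /=; first by case: ifP => e0; rewrite ?eqxx ?e0 ?orbT.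
by apply/homogP => k; rewrite coef_hpart IHn.
Qed.

Lemma hpart_id n e (x : mpoly n) : homog e x -> hpart n e x = x.
Proof.
elim: n e x => [|n IHn] e x /=; first by case/orP=> /eqP->; [case: ifP | rewrite eqxx].
by move=> /homogP hx; apply/polyP => k; rewrite coef_hpart IHn.
Qed.

Lemma inS_hpart d n e (x : mpoly n) : inS d x -> inS d (hpart n e x).
Proof.
elim: n e x => [|n IHn] e x /=; first by case: ifP => // _ _; exact: (inRd_int d 0).
by move=> /inSP Sx; apply/inSP => k; rewrite coef_hpart IHn.
Qed.

Lemma hpartMr n b e (x y : mpoly n) :
  homog b y -> hpart n e (x * y) = hpart n (e - b) x * y.
Proof.
elim: n b e x y => [|n IHn] b e x y /=.
  case/orP=> /eqP->; first by rewrite !mulr0; case: ifP.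
  by rewrite subr0; case: ifP; rewrite ?mul0r.
move=> /homogP hy; apply/polyP => k; rewrite coef_hpart !coefM hpart_sum.
apply: eq_bigr => i _; rewrite coef_hpart (IHn (b - (k - i)%N%:Z)) //.
by congr (hpart _ _ _ * _); rewrite -subzn -1?ltnS //; ring.
Qed.

Lemma hpart_lincomb n m D e (x : mpoly n) (A F : 'I_m -> mpoly n) :
  homog D x -> (forall j, homog e (F j)) -> x = \sum_j A j * F j ->
  x = \sum_j hpart n (D - e) (A j) * F j.
Proof.
move=> hx hF xE; rewrite -(hpart_id hx) {1}xE hpart_sum.
by apply: eq_bigr => j _; rewrite (hpartMr _ _ (hF j)).
Qed.

Lemma homog_coef_prod_XsubC n m (c : 'I_m -> mpoly n) :
  (forall i, homog 1 (c i)) ->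
  forall k, homog (m%:Z - k%:Z) (\prod_(i < m) ('X - (c i)%:P))`_k.
Proof.
elim: m c => [|m IHm] c hc k.
  rewrite big_ord0 coef1; case: eqP => [->|_]; last exact: homog0.
  by rewrite subr0 -(mcst1 n) homog_mcst.
rewrite big_ord_recr /= mulrBr coefB coefMX coefMC; apply: homogD.
  case: eqP => [->|/eqP k0]; first exact: homog0.
  have -> : m.+1%:Z - k%:Z = m%:Z - k.-1%:Z.
    by rewrite -[k in LHS]prednK ?lt0n // -[k.-1.+1]addn1 -[m.+1]addn1 !PoszD; ring.
  exact: IHm.
have -> : m.+1%:Z - k%:Z = m%:Z - k%:Z + 1 by rewrite -[m.+1]addn1 PoszD; ring.
by apply/homogN/homogM; [apply: IHm | apply: hc].
Qed.

Section AntiDerivative.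
Variable d : nat.
Local Notation n := d.-1.

Lemma size_fder : size (fder d) = n.+1.
Proof. by rewrite /fder size_prod_XsubC /index_enum /= -enumT size_enum_ord. Qed.

Lemma deriv_fs : (fs d)^`() = fder d.
Proof.
rewrite /fs raddf_sum /= -[RHS]coefK poly_def; apply: eq_bigr => k _.
rewrite deriv_mulC derivXn /= mulrnAr -mulrnAl -polyCMn mul_polyC.
congr (_ *: _); rewrite -mulrnAr -(mulr_natr (mcst n _)) -(mcst_nat n k.+1).
by rewrite -mcstM mulVf ?mcst1 ?mulr1 // pnatr_eq0.
Qed.

Lemma horner_fs0 : (fs d).[0] = 0.
Proof.
rewrite /fs horner_sum big1 // => k _.
by rewrite hornerCM hornerXn expr0n /= mulr0.
Qed.

Lemma size_fs : (size (fs d) <= n.+2)%N.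
Proof.
apply/leq_sizeP => j lt_j; rewrite /fs coef_sum big1 // => k _.
rewrite coefCM coefXn; case: eqP => [jk|_]; last by rewrite mulr0.
have lt_k : (k < n.+1)%N by rewrite -size_fder.
by move: lt_j; rewrite jk ltnS leqNgt lt_k.
Qed.

Lemma inS_fs : (1 <= d)%N -> @inS d n.+1 (fs d).
Proof.
move=> d1; have Sfder : @inS d n.+1 (fder d).
  apply: inS_prod => i _; apply: inSD; first exact: inS_polyX.
  exact/inSN/inSC/inS_mvar.
rewrite /fs; apply: inS_sum => k _; apply: inSM; last exact/inSX/inS_polyX.
apply/inSC/inSM; first by move/inSP: Sfder.
have lt_k : (k < n.+1)%N by rewrite -size_fder.
by rewrite prednK // in lt_k; apply/inS_mcst/inRdV_nat; rewrite ltn0Sn.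
Qed.

Lemma homog_Fi j : (1 <= d)%N -> homog d%:Z (Fi d j).
Proof.
move=> d1; rewrite /Fi /fs horner_sum; apply: homog_sum => k _.
rewrite hornerCM hornerXn.
have hcoef := homog_coef_prod_XsubC (fun i : 'I_n => homog_mvar n i) k.
have -> : d%:Z = n%:Z - k%:Z + 0 + k.+1%:Z.
  by rewrite -[k.+1]addn1 -{1}(prednK d1) -[n.+1]addn1 !PoszD; ring.
exact: homogM (homogM hcoef (homog_mcst n (k.+1%:R)^-1)) (homogX k.+1 (homog_mvar n j)).
Qed.

End AntiDerivative.

Section PolynomialsOverRd.
Variables (d n : nat).

Definition inS_pred : {pred mpoly n} := fun x => inS d x.

Lemma inS_subring_closed : GRing.subring_closed inS_pred.
Proof.
split=> [|x y Sx Sy|x y Sx Sy]; first exact: inS1.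
  by apply/inSD/inSN.
exact: inSM.
Qed.

Record Smpoly := SMpoly { Sval : mpoly n; SvalP : inS_pred Sval }.
HB.instance Definition _ := [isSub for Sval].
HB.instance Definition _ := [Choice of Smpoly by <:].
HB.instance Definition _ := GRing.SubChoice_isSubComNzRing.Build
  (mpoly n) inS_pred Smpoly inS_subring_closed.

Lemma lift_poly_inS (p : {poly mpoly n}) : @inS d n.+1 p ->
  exists q : {poly Smpoly}, map_poly val q = p.
Proof.
move=> /inSP Sp; exists (\poly_(k < size p) insubd 0 p`_k).
apply/polyP => k; rewrite coef_map coef_poly; case: ltnP => [_|le_p_k].
  exact/insubdK/Sp.
by rewrite [RHS]nth_default.
Qed.

Lemma invertible_nat_Smpoly k : (0 < k <= d)%N -> exists y : Smpoly, y * k%:R = 1.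
Proof.
move=> k_gt0; exists (SMpoly (inS_mcst n (inRdV_nat k_gt0))); apply: val_inj.
rewrite rmorphM rmorph_nat rmorph1 /= -(mcst_nat n k) -mcstM.
by rewrite mulVf ?mcst1 // pnatr_eq0 -lt0n; case/andP: k_gt0.
Qed.

End PolynomialsOverRd.

Lemma mvar_pow_lincomb_Fi d : (2 <= d)%N -> forall i : 'I_d.-1,
  exists N (A : 'I_d.-1 -> mpoly d.-1),
    (forall j, inS d (A j)) /\ mvar d.-1 i ^+ N = \sum_j A j * Fi d j.
Proof.
move=> d2 i; have d1 : (1 <= d)%N := ltnW d2.
pose S := Smpoly d d.-1.
have val_inj_S : injective (val : S -> mpoly d.-1) := val_inj.
pose sS j : S := SMpoly (inS_mvar d d.-1 j : @inS_pred d d.-1 (mvar d.-1 j)).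
have [fS fSE] := lift_poly_inS (inS_fs d1).
have fS' : fS^`() = \prod_(j < d.-1) ('X - (sS j)%:P).
  apply: (map_inj_poly val_inj_S (rmorph0 _)).
  rewrite -deriv_map fSE deriv_fs rmorph_prod; apply: eq_bigr => j _.
  rewrite rmorphB /=; congr (_ - _); apply/polyP => k.
    by rewrite coef_map_id0 //= !coefX; case: eqP.
  by rewrite coef_map_id0 //= !coefC; case: eqP.
have fS0 : fS.[0] = 0.
  by apply: val_inj_S; rewrite -horner_map fSE rmorph0 horner_fs0.
have size_fS : (size fS <= d.-1.+2)%N.
  by rewrite -(size_map_inj_poly val_inj_S (rmorph0 _)) fSE size_fs.
have inv_k k : (0 < k <= d.-1)%N -> exists y : S, y * k%:R = 1.
  case/andP=> k0 kd; apply: invertible_nat_Smpoly.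
  by rewrite k0 (leq_trans kd) ?leq_pred.
have [N [A NA]] := critical_point_pow_in_ideal inv_k fS' fS0 size_fS i.
exists N, (fun j => val (A j)); split=> [j|]; first exact: valP.
have := congr1 val NA; rewrite rmorphXn rmorph_sum /= => ->.
apply: eq_bigr => j _; congr (_ * _).
by rewrite /Fi -fSE -[mvar _ _]/(val (sS j)) horner_map.
Qed.

Theorem lemma2p3 (d : nat) (hd : (2 <= d)%N) :
  exists D : nat, (1 <= D)%N /\
  exists A : 'I_d.-1 -> 'I_d.-1 -> mpoly d.-1,
    (forall i j, inS d (A i j) /\ homog (D%:Z - d%:Z) (A i j)) /\
    (forall i : 'I_d.-1,
       mvar d.-1 i ^+ D = \sum_(j < d.-1) A i j * Fi d j).
Proof.
have [N /fin_all_exists[A NA]] := fin_all_exists (mvar_pow_lincomb_Fi hd).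
pose D := (\max_i N i).+1.
exists D; split=> //.
exists (fun i j : 'I_d.-1 =>
  hpart d.-1 (D%:Z - d%:Z) (mvar d.-1 i ^+ (D - N i) * A i j)).
split=> [i j|i].
  split; last exact: homog_hpart.
  by apply/inS_hpart/inSM; [apply/inSX/inS_mvar | case: (NA i)].
apply: hpart_lincomb (homogX D (homog_mvar _ _)) (fun j => homog_Fi j (ltnW hd)) _.
have le_N_D : (N i <= D)%N by rewrite ltnW // ltnS (leq_bigmax i).
rewrite -{1}(subnK le_N_D) exprD; case: (NA i) => _ ->; rewrite mulr_sumr.
by apply: eq_bigr => j _; rewrite mulrA.
Qed.
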